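(* Let $R\ge1$ be an integer, $L=6R$, $\eta=n^{1/(2L)}$, and $\mu_*^A=\frac12+2\sum_{k:\,1\le2k+1\le L}\eta^{-(2k+1)}$. For any $\ell\in\{0,1,\ldots,L\}$ and any $\sigma^A\in\mathcal{D}_\ell^A$, $\Pr_{\mu^A\sim\sigma^A}[\mu^A=\mu_*^A]\le e^{4\ell/\eta}\eta^{-2d_1}$, where $d_1$ is the number of odd integers in $\{\ell+1,\ldots,L\}$.
   Context: For $\ell\in\{0,\ldots,L\}$, $S_\ell^A$ is the set of all numbers $\frac12+2\sum_{k:\,1\le2k+1\le\ell}\eta^{-(2k+1)}+2\sum_{k:\,\ell<2k+1\le L}X_{2k+1}\eta^{-(2k+1)}$ with all $X_{2k+1}\in\{0,1\}$. $\pi^A$ is the distribution of $\frac12+2\sum_{k:\,1\le2k+1\le L}X_{2k+1}\eta^{-(2k+1)}$ with $X_{2k+1}$ independent Bernoulli with mean $\eta^{-2}$. $\mathcal{D}_\ell^A$ is the class of distributions $\sigma^A$ with support $S_\ell^A$ such that for all $x,y\in S_\ell^A$, $\frac{\Pr_{\sigma^A}[x]}{\Pr_{\sigma^A}[y]}=\frac{\Pr_{\pi^A}[x]}{\Pr_{\pi^A}[y]}\cdot e^{c}$ for some $c\in[-4\ell/\eta,4\ell/\eta]$. *)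

From HB Require Import structures.
From mathcomp Require Import all_boot all_order all_algebra.
From mathcomp Require Import reals sequences exp.
Unset Printing Implicit Defensive.
Import Order.TTheory GRing.Theory Num.Theory.
Local Open Scope ring_scope.

(* Index k ranges over {k : 1 <= 2k+1 <= L}, i.e. k < (L+1)/2; X k stands for X_{2k+1}. *)
Notation oddIdx L := ('I_(L.+1./2)).

Section Defs.
Variable R : realType.

Definition etaA (n L : nat) : R := (n%:R) `^ ((2 * L)%:R)^-1.

Definition muA (eta : R) (L l : nat) (X : {ffun oddIdx L -> bool}) : R :=
  2^-1 + 2 * (\sum_(k < L.+1./2 | (2 * k + 1 <= l)%N) eta ^- (2 * k + 1))
       + 2 * (\sum_(k < L.+1./2 | (l < 2 * k + 1)%N) (X k)%:R * eta ^- (2 * k + 1)).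

(* S_l^A, as a (possibly repetitive) list of reals *)
Definition SA (eta : R) (L l : nat) : seq R :=
  [seq muA eta L l X | X : {ffun oddIdx L -> bool}].

Definition muStar (eta : R) (L : nat) : R :=
  2^-1 + 2 * (\sum_(k < L.+1./2) eta ^- (2 * k + 1)).

(* Pr_{pi^A}[x]: X_{2k+1} independent Bernoulli(eta^{-2}) *)
Definition piA (eta : R) (L : nat) (x : R) : R :=
  \sum_(X : {ffun oddIdx L -> bool} | muA eta L 0 X == x)
     \prod_(k < L.+1./2) (if X k then eta ^- 2 else 1 - eta ^- 2).

(* sigma : R -> R is a probability mass function whose support is exactly S_l^A,
   with the ratio condition defining D_l^A. *)
Definition inDA (eta : R) (L l : nat) (sigma : R -> R) : Prop :=
  [/\ (forall x, 0 <= sigma x),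
      (forall x, sigma x != 0 <-> x \in SA eta L l),
      \sum_(x <- undup (SA eta L l)) sigma x = 1 &
      (forall x y, x \in SA eta L l -> y \in SA eta L l ->
         exists c : R, - (4 * l%:R / eta) <= c <= 4 * l%:R / eta /\
           sigma x / sigma y = piA eta L x / piA eta L y * expR c)].

Definition d1 (L l : nat) : nat := count odd (iota l.+1 (L - l)).

End Defs.

From HB Require Import structures.
From mathcomp Require Import all_boot all_order all_algebra.
From mathcomp Require Import reals sequences exp.
From mathcomp Require Import zify.
From mathcomp.algebra_tactics Require Import ring.
Import Order.TTheory GRing.Theory Num.Theory.

(* At x = mu_*^A the ratio condition gives sigma(x) pi(y) <= e^{4l/eta} pi(x)
   sigma(y) for every y in S_l^A; summing over y yields
   sigma(x) pi(S_l^A) <= e^{4l/eta} pi(x).  Only the all-ones outcome reaches x,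
   so pi(x) = eta^{-2m} with m the number of odd indices, while pi(S_l^A) is at
   least the probability eta^{-2(m - d_1)} that every coordinate frozen at
   level l equals 1. *)

Lemma count_odd_iota0 n : count odd (iota 0 n) = n./2.
Proof. by elim: n => // n IH; rewrite -addn1 iotaD count_cat IH /=; lia. Qed.

Lemma d1E L l : l <= L -> d1 L l = L.+1./2 - l.+1./2.
Proof.
move=> le_lL; rewrite -!count_odd_iota0.
have -> : L.+1 = (l.+1 + (L - l))%N by lia.
by rewrite iotaD count_cat addKn.
Qed.

Definition frozen (L l : nat) : pred (oddIdx L) :=
  [pred k : oddIdx L | 2 * k + 1 <= l].

Lemma card_frozenC L l : l <= L -> #|[predC frozen L l]| = d1 L l.
Proof.
move=> le_lL; rewrite -sum1_card.
rewrite (eq_bigl (fun k : 'I__ => l < 2 * k + 1)) => [|k]; last by rewrite !inE -ltnNge.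
rewrite -(big_mkord (fun k => l < 2 * k + 1) (fun _ => 1)) sum1_count.
have half_le : l.+1./2 <= L.+1./2 by lia.
rewrite /index_iota subn0 d1E // -{1}(subnKC half_le) iotaD count_cat add0n.
rewrite (eq_in_count (a2 := pred0)) => [|k]; last first.
  by rewrite mem_iota add0n => /andP[_ lt_k]; apply/negbTE; rewrite -leqNgt; lia.
rewrite count_pred0 (eq_in_count (a2 := predT)) => [|k]; last first.
  by rewrite mem_iota /= => /andP[le_k _]; lia.
by rewrite add0n count_predT size_iota.
Qed.

Local Open Scope ring_scope.

Section WeightedSums.
Variables (R : numDomainType) (I : finType).

Definition bernoulli_weight (q : R) (X : {ffun I -> bool}) : R :=
  \prod_i (if X i then q else 1 - q).

Lemma bernoulli_weight_ge0 q X : 0 <= q <= 1 -> 0 <= bernoulli_weight q X.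
Proof.
by case/andP=> q_ge0 q_le1; apply: prodr_ge0 => i _; case: (X i); rewrite ?subr_ge0.
Qed.

Lemma sum_bernoulli_weight_forall q (A : pred I) :
  \sum_(X : {ffun I -> bool} | [forall i in A, X i]) bernoulli_weight q X = q ^+ #|A|.
Proof.
have marginal i : \sum_(b | (i \in A) ==> b) (if b then q else 1 - q) =
    if i \in A then q else 1.
  by rewrite big_mkcond big_bool /=; case: (i \in A); rewrite ?addr0 // subrKC.
rewrite -prodr_const (big_mkcond (fun i => i \in A)).
under eq_bigr do rewrite -marginal.
rewrite bigA_distr_big_dep; apply: eq_bigl => X.
apply/forall_inP/familyP => HX i; rewrite ?unfold_in.
  by apply/implyP => iA; apply: HX.
by move: (HX i); rewrite unfold_in => /implyP HXi /HXi.
Qed.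

Lemma sum_indicator_eq_sum (w : I -> R) (X : I -> bool) : (forall i, 0 < w i) ->
  (\sum_i (X i)%:R * w i == \sum_i w i) = [forall i, X i].
Proof.
move=> w_gt0; rewrite eq_sym -subr_eq0 -sumrB.
have term_ge0 i : 0 <= w i - (X i)%:R * w i.
  by case: (X i); rewrite /= ?mul1r ?subrr ?mul0r ?subr0 //; exact: ltW.
apply/eqP/forallP => [/psumr_eq0P all0 i | allX].
  have /eqP := all0 (fun i _ => term_ge0 i) i isT.
  by case: (X i) => //; rewrite mul0r subr0 (gt_eqF (w_gt0 i)).
by apply: big1 => i _; rewrite allX mul1r subrr.
Qed.

Lemma sum_fibers_uniq (T : finType) (U : eqType) (f : T -> U) (F : T -> R)
    (s : seq U) : uniq s ->
  \sum_(y <- s) \sum_(X | f X == y) F X = \sum_(X | f X \in s) F X.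
Proof.
elim: s => [|y s IH] /= => [_ | /andP[y_notin_s uniq_s]].
  by rewrite big_nil big_pred0.
rewrite big_cons IH // [RHS](bigID (fun X => f X == y)) /=.
by congr (_ + _); apply: eq_bigl => X; rewrite in_cons;
  case: eqP => [-> | _]; rewrite ?(negbTE y_notin_s) ?andbT ?andbF.
Qed.

Lemma pmf_mul_sum_le (T : eqType) (s : seq T) (sigma p : T -> R) x e :
  \sum_(y <- s) sigma y = 1 ->
  (forall y, y \in s -> sigma x * p y <= e * p x * sigma y) ->
  sigma x * \sum_(y <- s) p y <= e * p x.
Proof.
move=> sum1 cross; rewrite -[leRHS]mulr1 -sum1 !mulr_sumr !big_seq.
exact: ler_sum.
Qed.

End WeightedSums.

Lemma ratio_cross_le (R : realType) (sx sy px py c B : R) :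
  0 < sx -> 0 < sy -> 0 <= px -> c <= B ->
  sx / sy = px / py * expR c -> sx * py <= expR B * px * sy.
Proof.
move=> sx_gt0 sy_gt0 px_ge0 le_cB ratio.
have py_neq0 : py != 0.
  apply/eqP => py0; move/eqP: ratio; rewrite py0 invr0 mulr0 mul0r.
  by rewrite gt_eqF // divr_gt0.
have -> : sx * py = expR c * px * sy.
  by rewrite -[sx](divfK (lt0r_neq0 sy_gt0)) ratio; field.
by rewrite -!mulrA ler_wpM2r ?ler_expR // mulr_ge0 //; exact: ltW.
Qed.

Section MeanValues.
Variables (R : realType) (eta : R) (L : nat).
Implicit Types X : {ffun oddIdx L -> bool}.

Lemma etaA_ge1 n : (1 <= n)%N -> 1 <= etaA R n L.
Proof.
move=> n_ge1; rewrite -(powRr0 n%:R) ler_powR ?ler1n //.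
by rewrite invr_ge0.
Qed.

Lemma muA0E X :
  muA R eta L 0 X = 2^-1 + 2 * \sum_k (X k)%:R * eta ^- (2 * k + 1).
Proof.
rewrite /muA big_pred0 => [|k]; last by rewrite addn1.
by rewrite mulr0 addr0; congr (_ + 2 * _); apply: eq_bigl => k; rewrite addn1.
Qed.

Lemma muA_eq_muA0 l X : {in frozen L l, forall k, X k} ->
  muA R eta L l X = muA R eta L 0 X.
Proof.
move=> X_frozen; rewrite muA0E /muA -addrA -mulrDr.
rewrite [in RHS](bigID (fun k : oddIdx L => (2 * k + 1 <= l)%N)) /=.
congr (_ + 2 * (_ + _)).
  by apply: eq_bigr => k /X_frozen ->; rewrite mul1r.
by apply: eq_bigl => k; rewrite -ltnNge.
Qed.

Lemma muStarE : muStar R eta L = muA R eta L 0 [ffun => true].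
Proof.
by rewrite muA0E; congr (_ + 2 * _); apply: eq_bigr => k _; rewrite ffunE mul1r.
Qed.

Lemma muStar_in_SA l : muStar R eta L \in SA R eta L l.
Proof.
rewrite muStarE -(muA_eq_muA0 l) => [|k _]; last by rewrite ffunE.
by apply: map_f; rewrite mem_enum.
Qed.

Lemma muA0_eq_muStar X : 0 < eta ->
  (muA R eta L 0 X == muStar R eta L) = [forall k, X k].
Proof.
move=> eta_gt0; rewrite muStarE !muA0E (inj_eq (addrI _)).
rewrite (inj_eq (mulfI _)) ?pnatr_eq0 //.
under [X in _ == X]eq_bigr do rewrite ffunE mul1r.
by apply: sum_indicator_eq_sum => k; rewrite invr_gt0 exprn_gt0.
Qed.

Lemma piA_muStar l : 0 < eta -> (l <= L)%N ->
  piA R eta L (muStar R eta L) = eta ^- 2 ^+ #|frozen L l| * eta ^- (2 * d1 L l).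
Proof.
move=> eta_gt0 le_lL.
rewrite [X in _ * X](_ : _ = eta ^- 2 ^+ d1 L l); last by rewrite exprVn -exprM.
rewrite -card_frozenC // -exprD cardC card_ord /piA.
rewrite (eq_bigl _ _ (fun X => muA0_eq_muStar X eta_gt0)).
rewrite -[in RHS](card_ord L.+1./2) -(sum_bernoulli_weight_forall _ _ _ predT).
by apply: eq_bigl => X; apply/forallP/forall_inP => HX k //; apply: HX.
Qed.

Lemma sum_piA_SA_ge l : 1 <= eta ->
  eta ^- 2 ^+ #|frozen L l| <= \sum_(y <- undup (SA R eta L l)) piA R eta L y.
Proof.
move=> eta_ge1; have eta_gt0 : 0 < eta := lt_le_trans ltr01 eta_ge1.
have q_range : 0 <= eta ^- 2 <= 1.
  by rewrite invr_ge0 invf_le1 ?exprn_ge0 ?exprn_ege1 ?exprn_gt0 // ltW.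
rewrite /piA sum_fibers_uniq ?undup_uniq // -sum_bernoulli_weight_forall.
rewrite [leRHS]big_mkcond [leLHS]big_mkcond ler_sum // => X _.
case: ifP => [/forall_inP X_frozen | _]; last by case: ifP; rewrite ?bernoulli_weight_ge0.
by rewrite mem_undup -(muA_eq_muA0 _ _ X_frozen) map_f ?mem_enum.
Qed.

Lemma sigma_muStar_le l (sigma : R -> R) : 1 <= eta -> (l <= L)%N ->
  inDA R eta L l sigma ->
  sigma (muStar R eta L) <= expR (4 * l%:R / eta) * eta ^- (2 * d1 L l).
Proof.
move=> eta_ge1 le_lL [sigma_ge0 supp sum1 ratio].
have eta_gt0 : 0 < eta := lt_le_trans ltr01 eta_ge1.
have q_gt0 : 0 < eta ^- 2 by rewrite invr_gt0 exprn_gt0.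
have piA_x := piA_muStar l eta_gt0 le_lL.
set x := muStar R eta L in piA_x *; set e := expR _.
have x_in_S : x \in SA R eta L l by exact: muStar_in_SA.
have sigma_gt0 y : y \in SA R eta L l -> 0 < sigma y.
  by move=> /(supp y).2; rewrite lt0r sigma_ge0 andbT.
have key : sigma x * \sum_(y <- undup (SA R eta L l)) piA R eta L y <= e * piA R eta L x.
  apply: pmf_mul_sum_le sum1 _ => y; rewrite mem_undup => y_in_S.
  have [c [/andP[_ le_cB] sigma_ratio]] := ratio x y x_in_S y_in_S.
  apply: ratio_cross_le sigma_ratio; rewrite ?sigma_gt0 //.
  by rewrite piA_x ltW // mulr_gt0 ?exprn_gt0 // invr_gt0 exprn_gt0.
rewrite -(ler_pM2r (exprn_gt0 #|frozen L l| q_gt0)).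
apply: le_trans (ler_wpM2l (sigma_ge0 x) (sum_piA_SA_ge l eta_ge1)) _.
by apply: le_trans key _; rewrite piA_x mulrA mulrAC.
Qed.

End MeanValues.

Theorem lemma9 (R : realType) (Rr n l : nat) (sigma : R -> R) :
  (1 <= Rr)%N -> (1 <= n)%N -> (l <= 6 * Rr)%N ->
  inDA R (etaA R n (6 * Rr)) (6 * Rr) l sigma ->
  sigma (muStar R (etaA R n (6 * Rr)) (6 * Rr))
    <= expR (4 * l%:R / etaA R n (6 * Rr)) * etaA R n (6 * Rr) ^- (2 * d1 (6 * Rr) l).
Proof. by move=> _ n_ge1 le_lL; apply: sigma_muStar_le => //; exact: etaA_ge1. Qed.
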